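(* In the single-period model described in the context, with short sales prohibitions (admissible strategies satisfy $h_0\in\mathbb{R}$, $h_m\ge 0$ for $m=1,\dots,M$), if there is no arbitrage under model uncertainty, then there exists a weak risk neutral nonlinear expectation, i.e. a nonempty family $\mathcal{Q}$ of probability measures on $\Omega$ such that $\sup_{Q\in\mathcal{Q}}Q(\omega)>0$ for all $\omega\in\Omega$ and $\inf_{Q\in\mathcal{Q}}E_Q[\Delta S_m^*]\le 0$ for all $m=1,\dots,M$.
   Context: Single-period model: $\Omega=\{\omega_1,\dots,\omega_K\}$ is a finite sample space with all subsets measurable. $\mathcal{P}$ is a nonempty family of probability measures on $\Omega$ with $\sup_{P\in\mathcal{P}}P(\omega)>0$ for every $\omega\in\Omega$. There is a bond with $S_0(0)=1$, $S_0(1)=1+r$, $r\ge 0$ a constant, and $M$ risky securities with known initial prices $S_m(0)>0$ and random terminal prices $S_m(1):\Omega\to\mathbb{R}$, $m=1,\dots,M$. Discounted prices: $S_m^*(t)=S_m(t)/S_0(t)$, $t=0,1$, and $\Delta S_m^*=S_m^*(1)-S_m^*(0)$. For a trading strategy $h=(h_0,\dots,h_M)$, the discounted portfolio value is $V_t^*=h_0+\sum_{m=1}^M h_m S_m^*(t)$, $t=0,1$. A trading strategy is an arbitrage under model uncertainty if (i) $V_0^*=0$ and (ii) $V_1^*(\omega)\ge 0$ for all $\omega\in\Omega$ and $\sup_{P\in\mathcal{P}}E_P[V_1^*]>0$. ''No arbitrage under model uncertainty'' means no admissible trading strategy is an arbitrage under model uncertainty. *)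

From mathcomp Require Import all_boot all_order all_algebra.
From mathcomp Require Import boolp classical_sets reals.
Set Implicit Arguments. Unset Strict Implicit. Unset Printing Implicit Defensive.
Import Order.TTheory GRing.Theory Num.Theory.
Local Open Scope ring_scope.
Local Open Scope classical_set_scope.

Section Defs.
Variables (R : realType) (Omega : finType).

(* A probability measure on the finite sample space Omega (all subsets
   measurable) is determined by its point masses P(omega). *)
Definition is_prob (P : Omega -> R) : Prop :=
  (forall w, 0 <= P w) /\ \sum_(w : Omega) P w = 1.

Definition expect (P : Omega -> R) (X : Omega -> R) : R :=
  \sum_(w : Omega) P w * X w.

Definition charges_all (Pf : set (Omega -> R)) : Prop :=
  forall w : Omega, 0 < sup [set P w | P in Pf].

Variables (M : nat) (r : R) (S0 : 'I_M -> R) (S1 : 'I_M -> Omega -> R).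

(* discounted prices: S*_m(0) = S_m(0)/S_0(0) = S_m(0), S*_m(1) = S_m(1)/(1+r) *)
Definition disc0 (m : 'I_M) : R := S0 m / 1.
Definition disc1 (m : 'I_M) (w : Omega) : R := S1 m w / (1 + r).
Definition dS (m : 'I_M) (w : Omega) : R := disc1 m w - disc0 m.

Definition V0 (h0 : R) (h : 'I_M -> R) : R := h0 + \sum_(m < M) h m * disc0 m.
Definition V1 (h0 : R) (h : 'I_M -> R) (w : Omega) : R :=
  h0 + \sum_(m < M) h m * disc1 m w.

Definition admissible_ss (h : 'I_M -> R) : Prop := forall m, 0 <= h m.

Definition arbitrage_mu (Pf : set (Omega -> R)) (h0 : R) (h : 'I_M -> R) : Prop :=
  V0 h0 h = 0 /\ (forall w, 0 <= V1 h0 h w) /\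
  0 < sup [set expect P (V1 h0 h) | P in Pf].

Definition NA_mu_ss (Pf : set (Omega -> R)) : Prop :=
  forall h0 h, admissible_ss h -> ~ arbitrage_mu Pf h0 h.

Definition weak_risk_neutral (Q : set (Omega -> R)) : Prop :=
  Q `<=` is_prob /\ Q !=set0 /\ charges_all Q /\
  forall m : 'I_M, inf [set expect Q' (dS m) | Q' in Q] <= 0.
End Defs.

(* The Dirac measures at all states form a weak risk neutral nonlinear
   expectation as soon as every discounted increment dS_m is nonpositive in
   some state.  This holds under no arbitrage: if dS_m > 0 everywhere, then
   buying one share of asset m with borrowed money costs nothing, never loses,
   and has positive expected gain under any probability of the family. *)

From mathcomp Require Import all_boot all_order all_algebra.
From mathcomp Require Import boolp classical_sets reals.
Import Order.TTheory GRing.Theory Num.Theory.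
Local Open Scope ring_scope.
Local Open Scope classical_set_scope.

Section FiniteExpectation.
Set Implicit Arguments. Unset Strict Implicit.
Variables (R : realType) (Omega : finType).
Implicit Types (P : Omega -> R) (X : Omega -> R).

Lemma prob_le1 P w : is_prob P -> P w <= 1.
Proof.
move=> [P_ge0 <-]; rewrite (bigD1 w) //= lerDl.
by apply: sumr_ge0 => v _; exact: P_ge0.
Qed.

Lemma prob_exists_gt0 P : is_prob P -> exists w, 0 < P w.
Proof.
move=> [P_ge0 P_sum].
have [|w /andP[_ Pw]] := psumr_neq0P (P := predT) (fun w _ => P_ge0 w).
  by rewrite P_sum; apply/eqP; exact: oner_neq0.
by exists w.
Qed.

Lemma expect_gt0 P X : is_prob P -> (forall w, 0 < X w) -> 0 < expect P X.
Proof.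
move=> probP X_gt0; have [P_ge0 _] := probP.
have PX_ge0 w : 0 <= P w * X w := mulr_ge0 (P_ge0 w) (ltW (X_gt0 w)).
rewrite lt_def sumr_ge0 // andbT psumr_neq0 //.
have [w Pw] := prob_exists_gt0 probP.
apply/hasP; exists w; first exact: mem_index_enum.
by rewrite mulr_gt0.
Qed.

Lemma ler_norm_expect P X : is_prob P -> `|expect P X| <= \sum_w `|X w|.
Proof.
move=> probP; have [P_ge0 _] := probP.
apply: (le_trans (ler_norm_sum _ _ _)); apply: ler_sum => w _.
by rewrite normrM ger0_norm // ler_piMl // prob_le1.
Qed.

Section ProbabilityFamily.
Variables (Pf : set (Omega -> R)) (X : Omega -> R).
Hypothesis Pf_prob : Pf `<=` @is_prob R Omega.

Lemma expect_has_ubound : has_ubound [set expect P X | P in Pf].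
Proof.
exists (\sum_w `|X w|) => _ [P PfP <-].
exact: le_trans (ler_norm _) (ler_norm_expect X (Pf_prob PfP)).
Qed.

Lemma expect_has_lbound : has_lbound [set expect P X | P in Pf].
Proof.
exists (- \sum_w `|X w|) => _ [P PfP <-].
rewrite lerNl; apply: le_trans (ler_norm _) _.
by rewrite normrN; exact: ler_norm_expect X (Pf_prob PfP).
Qed.

Lemma sup_expect_gt0 : Pf !=set0 -> (forall w, 0 < X w) ->
  0 < sup [set expect P X | P in Pf].
Proof.
move=> [P PfP] X_gt0; apply: lt_le_trans (expect_gt0 (Pf_prob PfP) X_gt0) _.
by apply: ub_le_sup; [exact: expect_has_ubound | exists P].
Qed.

End ProbabilityFamily.

Definition dirac (a : Omega) : Omega -> R := fun w => (w == a)%:R.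

Lemma dirac_prob a : is_prob (dirac a).
Proof.
split=> [w|]; first by rewrite ler0n.
by rewrite (bigD1 a) //= /dirac eqxx big1 ?addr0 // => w /negbTE ->.
Qed.

Lemma expect_dirac a X : expect (dirac a) X = X a.
Proof.
rewrite /expect (bigD1 a) //= /dirac eqxx mul1r big1 ?addr0 //.
by move=> w /negbTE ->; rewrite mul0r.
Qed.

Definition diracs : set (Omega -> R) := [set dirac a | a in setT].

Lemma diracs_prob : diracs `<=` @is_prob R Omega.
Proof. by move=> _ [a _ <-]; exact: dirac_prob. Qed.

Lemma charges_all_diracs : charges_all diracs.
Proof.
move=> w; apply: lt_le_trans ltr01 _; apply: ub_le_sup.
- by exists 1 => _ [P /diracs_prob P_prob <-]; exact: prob_le1.
- by exists (dirac w); [exists w | rewrite /dirac eqxx].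
Qed.

Lemma inf_expect_diracs_le X w : inf [set expect Q X | Q in diracs] <= X w.
Proof.
rewrite -expect_dirac; apply: ge_inf; first exact: expect_has_lbound diracs_prob.
by exists (dirac w) => //; exists w.
Qed.

End FiniteExpectation.

Section ShortSalesNoArbitrage.
Set Implicit Arguments. Unset Strict Implicit.
Variables (R : realType) (Omega : finType) (M : nat) (r : R).
Variables (S0 : 'I_M -> R) (S1 : 'I_M -> Omega -> R).

Definition unit_position (m : 'I_M) : 'I_M -> R := fun i => (i == m)%:R.

Lemma unit_position_ge0 m : admissible_ss (unit_position m).
Proof. by move=> i; rewrite ler0n. Qed.

Lemma sum_unit_position m (F : 'I_M -> R) :
  \sum_(i < M) unit_position m i * F i = F m.
Proof.
rewrite (bigD1 m) //= /unit_position eqxx mul1r big1 ?addr0 //.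
by move=> i /negbTE ->; rewrite mul0r.
Qed.

Lemma V0_buy_one m : V0 S0 (- disc0 S0 m) (unit_position m) = 0.
Proof. by rewrite /V0 sum_unit_position addNr. Qed.

Lemma V1_buy_one m : V1 r S1 (- disc0 S0 m) (unit_position m) = dS r S0 S1 m.
Proof. by apply/funext => w; rewrite /V1 sum_unit_position addrC. Qed.

Lemma NA_ss_exists_dS_le0 (Pf : set (Omega -> R)) :
  Pf `<=` @is_prob R Omega -> Pf !=set0 -> NA_mu_ss r S0 S1 Pf ->
  forall m, exists w, dS r S0 S1 m w <= 0.
Proof.
move=> Pf_prob Pf_ne NA m; apply: contrapT => /forallNP dS_gt0.
have {}dS_gt0 w : 0 < dS r S0 S1 m w by rewrite ltNge; exact/negP/dS_gt0.
apply: (NA _ _ (unit_position_ge0 m)).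
split; first exact: V0_buy_one.
rewrite V1_buy_one; split; first by move=> w; exact: ltW.
exact: sup_expect_gt0.
Qed.

End ShortSalesNoArbitrage.

Theorem mainTheorem3 (R : realType) (Omega : finType)
  (Pf : set (Omega -> R))
  (HPprob : Pf `<=` is_prob (R:=R) (Omega:=Omega))
  (HPne : Pf !=set0)
  (HPchg : charges_all Pf)
  (M : nat) (r : R) (Hr : 0 <= r)
  (S0 : 'I_M -> R) (HS0 : forall m, 0 < S0 m)
  (S1 : 'I_M -> Omega -> R) :
  NA_mu_ss r S0 S1 Pf ->
  exists Q : set (Omega -> R), weak_risk_neutral r S0 S1 Q.
Proof.
move=> NA; exists (@diracs R Omega); split; [|split; [|split]].
- exact: diracs_prob.
- have [P /HPprob /prob_exists_gt0 [a _]] := HPne.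
  by exists (dirac R a), a.
- exact: charges_all_diracs.
- move=> m; have [w dS_le0] := NA_ss_exists_dS_le0 HPprob HPne NA m.
  exact: le_trans (inf_expect_diracs_le _ _) dS_le0.
Qed.
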